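(* Let $N\ge 1$, $\lambda$ a parameter, and for $x,p\in\mathbb{C}^N$ set $$L_k(x,p;\lambda)=\begin{pmatrix}-x_k & x_k(\lambda+x_k)+e^{p_k}\\ -1 & \lambda+x_k\end{pmatrix},\qquad T_N(x,p;\lambda)=L_N(x,p;\lambda)\cdots L_1(x,p;\lambda).$$ If $\widetilde{x}\in\mathbb{C}^N$ satisfies $e^{p_k}=(\widetilde{x}_k-x_k)(\lambda+x_k-\widetilde{x}_{k-1})$ for $k=1,\dots,N$, with periodic boundary conditions ($\widetilde x_0=\widetilde x_N$, $x_{N+1}=x_1$), then $\prod_{k=1}^N(\lambda+x_{k+1}-\widetilde{x}_k)$ is an eigenvalue of $T_N(x,p;\lambda)$.
   Context: The relation between $(x,p)$ and $\widetilde x$ is the first half of the Bäcklund transformation $F_\lambda$ of the periodic dual Toda lattice $\ddot x_k=\dot x_k(x_{k+1}-2x_k+x_{k-1})$. *)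

From Stdlib Require Import Reals.
From HB Require Import structures.
From mathcomp Require Import all_boot all_order all_algebra.
From mathcomp Require Import complex Rstruct.
Set Implicit Arguments. Unset Strict Implicit. Unset Printing Implicit Defensive.
Import Order.TTheory GRing.Theory Num.Theory.
Local Open Scope ring_scope.

Notation CC := (Rdefinitions.R)[i].

Definition cexp (z : CC) : CC :=
  let a := complex.Re z in let b := complex.Im z in
  Complex (Rtrigo_def.exp a * Rtrigo_def.cos b) (Rtrigo_def.exp a * Rtrigo_def.sin b).

(* Indices k = 1..N are represented by i : 'I_N with k = i+1.
   Lax matrix L_k(x,p;lambda). *)
Definition Lmat (N : nat) (x p : 'I_N -> CC) (lam : CC) (k : 'I_N) : 'M[CC]_2 :=
  \matrix_(i < 2, j < 2)
    if (i == 0) && (j == 0) then - x k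
    else if (i == 0) then x k * (lam + x k) + cexp (p k)
    else if (j == 0) then -1
    else lam + x k.

Definition Tmat (N : nat) (x p : 'I_N -> CC) (lam : CC) : 'M[CC]_2 :=
  \prod_(i < N) Lmat x p lam (rev_ord i).

(** Put [v_k = (xt_{k-1}, 1)^T].  The relation between [x, p] and [xt] says
    exactly that [L_k v_k = (lam + x_k - xt_{k-1}) v_{k+1}], so by periodicity
    [v_1 = v_{N+1}] is an eigenvector of [T_N] with eigenvalue
    [prod_k (lam + x_k - xt_{k-1})], which is the claimed product after the
    cyclic shift [k -> k+1]. *)

From HB Require Import structures.
From mathcomp Require Import all_boot all_order all_algebra.
From mathcomp Require Import complex Rstruct ring.
Set Implicit Arguments. Unset Strict Implicit. Unset Printing Implicit Defensive.
Import GRing.Theory.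
Local Open Scope ring_scope.

Lemma col_eigenvalue (F : fieldType) n (A : 'M[F]_n) (a : F) (v : 'cV_n) :
  A *m v = a *: v -> v != 0 -> eigenvalue A a.
Proof.
move=> Av v_neq0.
have : eigenvalue A^T a.
  apply/eigenvalueP; exists v^T; last by rewrite trmx_eq0.
  by rewrite -trmx_mul Av linearZ.
rewrite /eigenvalue !kermx_eq0 /row_free.
have -> : A^T - a%:M = (A - a%:M)^T by rewrite linearB /= tr_scalar_mx.
by rewrite mxrank_tr.
Qed.

Lemma mulmx_rev_prod_chain (R : comNzRingType) n (M : nat -> 'M[R]_n.+1)
    (v : nat -> 'cV[R]_n.+1) (c : nat -> R) m :
  (forall k, M k *m v k = c k *: v k.+1) ->
  (\prod_(i < m) M (m - i.+1)%N) *m v 0%N = (\prod_(i < m) c i) *: v m.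
Proof.
move=> Mv; elim: m => [|m IHm]; first by rewrite !big_ord0 mul1mx scale1r.
rewrite big_ord_recl subn1 /=.
under eq_bigr => i _ do rewrite /bump leq0n add1n.
by rewrite -mulmxE -mulmxA IHm -scalemxAr Mv scalerA big_ord_recr.
Qed.

Lemma inZpS p' k : inZp k.+1 = ordS (inZp k : 'I_p'.+1).
Proof. by apply: val_inj; rewrite /= -[in RHS]addn1 modnDml addn1. Qed.

Definition lax_col (c : CC) : 'cV[CC]_2 := \col_i (if i == 0 then c else 1).

Lemma Lmat_mul_lax_col N (x p : 'I_N -> CC) lam (k : 'I_N) (a b : CC) :
  cexp (p k) = (b - x k) * (lam + x k - a) ->
  Lmat x p lam k *m lax_col a = (lam + x k - a) *: lax_col b.
Proof.
move=> ep; apply/matrixP => i j.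
rewrite !mxE big_ord_recl big_ord1 !mxE /= ep.
by case: i => [[|[|//]] ?] /=; rewrite ?mxE /=; ring.
Qed.

Theorem theorem6 (N : nat) (hN : (1 <= N)%N) (lam : CC) (x p xt : 'I_N -> CC) :
  (forall k : 'I_N, cexp (p k) = (xt k - x k) * (lam + x k - xt (ord_pred k))) ->
  eigenvalue (Tmat x p lam) (\prod_(k < N) (lam + x (ordS k) - xt k)).
Proof.
case: N hN x p xt => [//|n] _ x p xt ep.
(* Indices are read mod [N] through [inZp], which builds in the periodic boundary conditions. *)
pose M k := Lmat x p lam (inZp k).
pose v k := lax_col (xt (ord_pred (inZp k))).
pose c k := lam + x (inZp k) - xt (ord_pred (inZp k)).
have Mv k : M k *m v k = c k *: v k.+1.
  by rewrite /v inZpS ordSK; apply: Lmat_mul_lax_col.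
have T_prod : Tmat x p lam = \prod_(i < n.+1) M (n.+1 - i.+1)%N.
  by apply: eq_bigr => i _; rewrite /M -[rev_ord i]valZpK.
have v_period : v n.+1 = v 0%N.
  by congr (lax_col (xt (ord_pred _))); apply: val_inj; rewrite /= modnn.
have c_prod : \prod_(i < n.+1) c i = \prod_(k < n.+1) (lam + x (ordS k) - xt k).
  rewrite (reindex_inj (@ordS_inj _)); apply: eq_bigr => k _.
  by rewrite /c !valZpK ordSK.
apply: (@col_eigenvalue _ _ _ _ (v 0%N)).
  by rewrite T_prod (mulmx_rev_prod_chain _ Mv) c_prod v_period.
by apply/eqP => /matrixP /(_ 1 0) /eqP; rewrite !mxE oner_eq0.
Qed.
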